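(* Let $\ell \in \mathscr{L}_q$ and let $H_q[N(v_\ell)]$ be the subgraph of $H_q$ induced on the neighbourhood of $v_\ell$. Then the edge set of $H_q[N(v_\ell)]$ is the edge-disjoint union of the edge sets of the following cliques: (i) $q+1$ cliques of order $q^2-1$, namely $C_p \setminus \{v_\ell\}$ for the $q+1$ points $p \in \ell \cap \mathscr{U}_q$ (these are pairwise vertex-disjoint); and (ii) $q^3-q$ cliques of order $q+1$, one for each point $p \in \mathscr{U}_q \setminus \ell$, namely $C_p \cap N(v_\ell)$, consisting of the $q+1$ secants through $p$ and through a point of $\ell \cap \mathscr{U}_q$. Every edge of $H_q[N(v_\ell)]$ lies in exactly one of these cliques. In particular, the graph $G_{v_\ell}$ is the union of $q^3-q$ edge-disjoint cliques of order $q+1$.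
   Context: Let $q$ be a prime power and $PG(2,q^2)$ the projective plane over $\mathbb{F}_{q^2}$. The Hermitian unital is $\mathscr{U}_q = \{\langle X,Y,Z\rangle : X^{q+1}+Y^{q+1}+Z^{q+1}=0\}$, a set of points of $PG(2,q^2)$. Every line of $PG(2,q^2)$ meets $\mathscr{U}_q$ in exactly $1$ or exactly $q+1$ points; lines meeting it in $q+1$ points are called secants, and $\mathscr{L}_q$ denotes the set of secants. The graph $H_q$ has vertex set $\{v_\ell : \ell \in \mathscr{L}_q\}$, with $v_{\ell_1} \sim v_{\ell_2}$ iff $\ell_1 \neq \ell_2$ and $\ell_1 \cap \ell_2 \in \mathscr{U}_q$. For each point $p \in \mathscr{U}_q$, let $C_p = \{v_\ell : p \in \ell \in \mathscr{L}_q\}$. For $\ell \in \mathscr{L}_q$, $G_{v_\ell}$ denotes the graph on vertex set $N(v_\ell)$ in which $v_{\ell_1} \sim v_{\ell_2}$ iff $\ell_1 \cap \ell_2 \in \mathscr{U}_q \setminus \ell$. *)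

From HB Require Import structures.
From mathcomp Require Import all_boot all_order all_algebra.
Unset Printing Implicit Defensive.
Import GRing.Theory.
Local Open Scope ring_scope.

(* Projective plane PG(2,F): a point (resp. line) is a 1- (resp. 2-)
   dimensional subspace of F^3, represented canonically by the square
   matrix <<A>>%MS spanning it (row-space representation of mxalgebra). *)

Definition is_point (F : finFieldType) (A : 'M[F]_3) : bool :=
  (\rank A == 1)%N && (<<A>>%MS == A).
Definition is_line (F : finFieldType) (A : 'M[F]_3) : bool :=
  (\rank A == 2)%N && (<<A>>%MS == A).

Definition pointsPG (F : finFieldType) : {set 'M[F]_3} := [set A | is_point F A].
Definition linesPG (F : finFieldType) : {set 'M[F]_3} := [set A | is_line F A].

Definition incident (F : finFieldType) (P L : 'M[F]_3) : bool := (P <= L)%MS.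

Definition herm (q : nat) (F : finFieldType) (v : 'rV[F]_3) : bool :=
  \sum_(i < 3) v 0 i ^+ q.+1 == 0.

Definition unital (q : nat) (F : finFieldType) : {set 'M[F]_3} :=
  [set P in pointsPG F |
     [exists v : 'rV[F]_3, [&& v != 0, (v <= P)%MS & herm q F v]]].

Definition unital_on (q : nat) (F : finFieldType) (L : 'M[F]_3) : {set 'M[F]_3} :=
  [set P in unital q F | incident F P L].

Definition secants (q : nat) (F : finFieldType) : {set 'M[F]_3} :=
  [set L in linesPG F | #|unital_on q F L| == q.+1].

Definition Hadj (q : nat) (F : finFieldType) (L1 L2 : 'M[F]_3) : bool :=
  (L1 != L2) && [exists P in unital q F, incident F P L1 && incident F P L2].

Definition Nbhd (q : nat) (F : finFieldType) (L : 'M[F]_3) : {set 'M[F]_3} :=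
  [set M in secants q F | Hadj q F L M].

Definition Cp (q : nat) (F : finFieldType) (p : 'M[F]_3) : {set 'M[F]_3} :=
  [set M in secants q F | incident F p M].

Definition Gadj (q : nat) (F : finFieldType) (L M1 M2 : 'M[F]_3) : bool :=
  (M1 != M2) &&
  [exists P in unital q F, [&& ~~ incident F P L, incident F P M1 & incident F P M2]].

Definition is_clique (q : nat) (F : finFieldType) (S : {set 'M[F]_3}) : Prop :=
  S \subset secants q F /\
  (forall M1 M2, M1 \in S -> M2 \in S -> M1 != M2 -> Hadj q F M1 M2).

Definition clique_at (q : nat) (F : finFieldType) (L p : 'M[F]_3) : {set 'M[F]_3} :=
  if incident F p L then Cp q F p :\ L else Cp q F p :&: Nbhd q F L.

From HB Require Import structures.
From mathcomp Require Import all_boot all_order all_algebra finfield zify.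
Import GRing.Theory.
Local Open Scope ring_scope.

Set Implicit Arguments.
Unset Strict Implicit.
Unset Printing Implicit Defensive.

(* Two distinct lines meet in exactly one point, so an edge of H_q[N(v_l)] -- two
   secants meeting l and each other in U_q -- determines the point p of U_q where they
   meet, and the edges through p form a clique: for p on l, all secants through p but l;
   for p off l, the joins of p with the q+1 points of l meeting U_q.  The counts come
   from the Hermitian form h(u,v) = sum_i u_i v_i^q: it has no totally isotropic plane,
   the tangent at p (the polar of p) is the only non-secant line through p, and on the
   line through isotropic u, w the isotropic points w + t u are those with
   t d + (t d)^q = 0, where d = h(u,w) <> 0; the trace x |-> x + x^q of F_{q^2} over F_q
   has a kernel of size q, so every line through two points of U_q meets it in exactly
   q+1 points. *)

Lemma card_roots_le (R : finIdomainType) (p : {poly R}) :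
  p != 0 -> (#|[set x | root p x]| <= (size p).-1)%N.
Proof.
move=> p0; rewrite -ltnS (leq_trans _ (leqSpred _)) // cardE.
apply: max_poly_roots p0 _ (enum_uniq _).
by apply/allP => x; rewrite mem_enum inE.
Qed.

Lemma card_le_image_kernel (U V : finZmodType) (f : U -> V) :
  {morph f : x y / x - y} ->
  (#|U| <= #|f @: U| * #|[set x | f x == 0%R]|)%N.
Proof.
move=> fB; pose sec y := odflt 0 [pick x | f x == y].
have fsec x : f (sec (f x)) = f x.
  by rewrite /sec; case: pickP => [y /eqP //|/(_ x)]; rewrite eqxx.
rewrite -cardsX -cardsT; apply: leq_trans (leq_imset_card (fun yk => sec yk.1 + yk.2) _).
apply/subset_leq_card/subsetP => x _; apply/imsetP.
exists (f x, x - sec (f x)); last by rewrite /= addrC subrK.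
rewrite !inE /= fB fsec subrr eqxx andbT; exact: imset_f.
Qed.

Section RowVectors.

Variables (F : fieldType) (n : nat).
Implicit Types (a b v : 'rV[F]_n) (x y t : F).

Lemma submx_rank_sym m1 m2 (A : 'M[F]_(m1, n)) (B : 'M[F]_(m2, n)) :
  (A <= B)%MS -> (\rank B <= \rank A)%N -> (B <= A)%MS.
Proof. by move=> sAB hr; rewrite -(mxrank_leqif_sup sAB).2 eqn_leq hr mxrankS. Qed.

Lemma rV_submx_sym a b : a != 0 -> b != 0 -> (a <= b)%MS = (b <= a)%MS.
Proof.
by move=> a0 b0; apply/idP/idP => sab; apply: submx_rank_sym sab _; rewrite !rank_rV a0 b0.
Qed.

Lemma rank_adds_rV a b : a != 0 -> b != 0 -> ~~ (a <= b)%MS -> \rank (a + b)%MS = 2.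
Proof.
move=> a0 b0 nab; have := mxrank_sum_cap a b.
suff -> : \rank (a :&: b)%MS = 0 by rewrite addn0 !rank_rV a0 b0.
apply/eqP; rewrite mxrank_eq0; apply: contraNT nab => ab0.
have : (a <= a :&: b)%MS.
  by apply: submx_rank_sym (capmxSl _ _) _; rewrite rank_rV a0 lt0n mxrank_eq0.
by rewrite sub_capmx => /andP [].
Qed.

Lemma rV_lin_indep a b x y : a != 0 -> b != 0 -> ~~ (a <= b)%MS ->
  x *: a + y *: b = 0 -> x = 0 /\ y = 0.
Proof.
move=> a0 b0 nab xy0; have [y0|y0] := eqVneq y 0.
  move: xy0; rewrite y0 scale0r addr0 => /eqP; rewrite scaler_eq0 (negbTE a0) orbF.
  by move/eqP.
case/negP: nab; rewrite rV_submx_sym //.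
have eb : y *: b = - (x *: a) by apply/eqP; rewrite -addr_eq0 addrC xy0.
by rewrite -[b](scalerK y0) eb scalerN scalerA -scaleNr scalemx_sub.
Qed.

Lemma addsmx_rV_coord a b v : (v <= a + b)%MS -> exists x y, v = x *: a + y *: b.
Proof.
case/sub_addsmxP => [[u1 u2] /= ->]; exists (u1 0 0), (u2 0 0).
by rewrite {1}[u1]mx11_scalar {1}[u2]mx11_scalar !mul_scalar_mx.
Qed.

Lemma rV_lin_comb_neq0 a b t : a != 0 -> b != 0 -> ~~ (a <= b)%MS -> b + t *: a != 0.
Proof.
move=> a0 b0 nab; apply/eqP => ba0.
have tab : t *: a + 1 *: b = 0 by rewrite scale1r addrC.
by have [_ /eqP] := rV_lin_indep a0 b0 nab tab; rewrite oner_eq0.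
Qed.

End RowVectors.

Section ProjectivePlane.

Variable F : finFieldType.
Local Notation V := 'rV[F]_3.
Implicit Types (a b u v w : V) (P Q L M : 'M[F]_3).

Definition pt v : 'M[F]_3 := <<v>>%MS.
Definition join P Q : 'M[F]_3 := <<(P + Q)%MS>>%MS.
Definition points_on L := [set P in pointsPG F | incident F P L].
Definition lines_through P := [set L in linesPG F | incident F P L].

Lemma pt_point v : v != 0 -> is_point F (pt v).
Proof. by move=> v0; rewrite /is_point /pt mxrank_gen rank_rV v0 genmx_id eqxx. Qed.

Lemma pointP P : is_point F P -> exists2 v, v != 0 & P = pt v.
Proof.
case/andP => /eqP rP /eqP gP; have P0 : P != 0 by rewrite -mxrank_eq0 rP.
exists (nz_row P); first by rewrite nz_row_eq0.
rewrite /pt -{1}gP; apply/genmxP; rewrite nz_row_sub andbT.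
by apply: submx_rank_sym (nz_row_sub P) _; rewrite rP rank_rV nz_row_eq0 P0.
Qed.

Lemma incident_pt v L : incident F (pt v) L = (v <= L)%MS.
Proof. by rewrite /incident /pt genmxE. Qed.

Lemma eq_pt u w : u != 0 -> w != 0 -> (pt u == pt w) = (u <= w)%MS.
Proof.
move=> u0 w0; apply/eqP/idP => [eq_uw|suw]; last by apply/genmxP; rewrite suw -rV_submx_sym.
have : (u <= pt u)%MS by rewrite genmxE.
by rewrite eq_uw genmxE.
Qed.

Lemma join_pt u v : join (pt u) (pt v) = <<(u + v)%MS>>%MS.
Proof. by apply/genmxP/eqmxP; apply: adds_eqmx; apply: genmxE. Qed.

Lemma span_line a b : a != 0 -> b != 0 -> ~~ (a <= b)%MS -> is_line F <<(a + b)%MS>>%MS.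
Proof. by move=> a0 b0 nab; rewrite /is_line mxrank_gen rank_adds_rV // genmx_id eqxx. Qed.

Lemma line_span L a b : is_line F L -> a != 0 -> b != 0 -> ~~ (a <= b)%MS ->
  (a <= L)%MS -> (b <= L)%MS -> L = <<(a + b)%MS>>%MS.
Proof.
case/andP => /eqP rL /eqP gL a0 b0 nab aL bL.
have sL : (a + b <= L)%MS by rewrite addsmx_sub aL bL.
rewrite -gL; apply/genmxP; rewrite sL andbT; apply: submx_rank_sym sL _.
by rewrite rL rank_adds_rV.
Qed.

Lemma line_uniq L M a b : is_line F L -> is_line F M ->
  a != 0 -> b != 0 -> ~~ (a <= b)%MS ->
  (a <= L)%MS -> (b <= L)%MS -> (a <= M)%MS -> (b <= M)%MS -> L = M.
Proof.
move=> lL lM a0 b0 nab aL bL aM bM.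
by rewrite (line_span lL a0 b0 nab aL bL) (line_span lM a0 b0 nab aM bM).
Qed.

Lemma points_line_uniq P Q L M : is_point F P -> is_point F Q -> P != Q ->
  is_line F L -> is_line F M -> incident F P L -> incident F Q L ->
  incident F P M -> incident F Q M -> L = M.
Proof.
case/pointP => [a a0 ->] /pointP [b b0 ->]; rewrite eq_pt // !incident_pt.
by move=> nab lL lM; apply: line_uniq lL lM a0 b0 nab.
Qed.

Lemma line_submx_eq L M : is_line F L -> is_line F M -> (L <= M)%MS -> L = M.
Proof.
case/andP => /eqP rL /eqP gL /andP [/eqP rM /eqP gM] sLM.
rewrite -gL -gM; apply/genmxP; rewrite sLM /=; apply: submx_rank_sym sLM _.
by rewrite rL rM.
Qed.

Lemma line_basis L : is_line F L ->
  exists a b, [/\ a != 0, b != 0, ~~ (a <= b)%MS & L = <<(a + b)%MS>>%MS].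
Proof.
move=> lL; have L0 : L != 0 by case/andP: lL => /eqP rL _; rewrite -mxrank_eq0 rL.
set a := nz_row L; have a0 : a != 0 by rewrite nz_row_eq0.
have : ~~ (L <= a)%MS.
  by apply/negP => /mxrankS; case/andP: lL => /eqP -> _; rewrite rank_rV a0.
case/row_subPn => i nba; have b0 : row i L != 0.
  by apply: contraNneq nba => ->; rewrite sub0mx.
have nab : ~~ (a <= row i L)%MS by rewrite (rV_submx_sym a0 b0).
exists a, (row i L); split => //.
exact: line_span lL a0 b0 nab (nz_row_sub L) (row_sub i L).
Qed.

Lemma lines_meet L M : is_line F L -> is_line F M ->
  exists2 v : V, v != 0 & (v <= L)%MS && (v <= M)%MS.
Proof.
case/andP => /eqP rL _ /andP [/eqP rM _].
have : (L :&: M)%MS != 0.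
  rewrite -mxrank_eq0; apply/eqP => LM0.
  have := mxrank_sum_cap L M; have := rank_leq_col (L + M)%MS; rewrite LM0 rL rM; lia.
move=> LM0; exists (nz_row (L :&: M)%MS); first by rewrite nz_row_eq0.
by rewrite -sub_capmx nz_row_sub.
Qed.

Lemma points_on_span a b : a != 0 -> b != 0 -> ~~ (a <= b)%MS ->
  points_on <<(a + b)%MS>>%MS = pt a |: [set pt (b + t *: a) | t : F].
Proof.
move=> a0 b0 nab; apply/setP => P; rewrite !inE; apply/andP/orP.
  case=> /pointP [v v0 ->]; rewrite incident_pt genmxE => /addsmx_rV_coord [x [y ev]].
  have [y0|y0] := eqVneq y 0.
    by left; rewrite eq_pt // ev y0 scale0r addr0 scalemx_sub.
  right; apply/imsetP; exists (x / y) => //; apply/eqP.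
  rewrite eq_pt ?rV_lin_comb_neq0 // ev.
  rewrite (_ : x *: a + y *: b = y *: (b + (x / y) *: a)) ?scalemx_sub //.
  by rewrite scalerDr scalerA mulrCA mulfV // mulr1 addrC.
case=> [/eqP ->|/imsetP [t _ ->]].
  by rewrite pt_point // incident_pt genmxE addsmxSl.
rewrite pt_point ?rV_lin_comb_neq0 // incident_pt genmxE.
by rewrite addmx_sub ?addsmxSr // scalemx_sub ?addsmxSl.
Qed.

Lemma pt_lin_comb_inj a b : a != 0 -> b != 0 -> ~~ (a <= b)%MS ->
  injective (fun t : F => pt (b + t *: a)).
Proof.
move=> a0 b0 nab t t' /eqP; rewrite eq_pt ?rV_lin_comb_neq0 // => /sub_rVP [c ec].
have : (t - c * t') *: a + (1 - c) *: b = 0.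
  rewrite -(subrr (b + t *: a)) {2}ec scalerDr scalerA !scalerBl scale1r opprD.
  by rewrite addrACA [t *: a + _]addrC [- _ - _]addrC.
case/(rV_lin_indep a0 b0 nab) => /eqP tc /eqP c1.
by move: tc c1; rewrite !subr_eq0 => /eqP -> /eqP c1; rewrite -c1 mul1r.
Qed.

Lemma pt_neq_lin_comb a b t : a != 0 -> b != 0 -> ~~ (a <= b)%MS ->
  pt a != pt (b + t *: a).
Proof.
move=> a0 b0 nab; rewrite eq_pt ?rV_lin_comb_neq0 //; apply/negP => /sub_rVP [c ec].
have : (c * t - 1) *: a + c *: b = 0.
  rewrite -(subrr a) {2}ec scalerDr scalerA scalerBl scale1r.
  by rewrite addrAC [(c * t) *: a + _]addrC.
case/(rV_lin_indep a0 b0 nab) => + c0; rewrite c0 mul0r sub0r => /eqP.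
by rewrite oppr_eq0 oner_eq0.
Qed.

Lemma card_points_on L : is_line F L -> #|points_on L| = #|F|.+1.
Proof.
case/line_basis => [a [b [a0 b0 nab ->]]].
rewrite points_on_span // cardsU1 card_imset ?cardsT; last exact: pt_lin_comb_inj.
suff /negbTE -> : pt a \notin [set pt (b + t *: a) | t : F] by [].
by apply/imsetP => [[t _ /eqP]]; rewrite (negbTE (pt_neq_lin_comb t a0 b0 nab)).
Qed.

Lemma card_lines_through u : u != 0 -> #|lines_through (pt u)| = #|F|.+1.
Proof.
move=> u0; set m := <<(u^C)%MS>>%MS.
have lm : is_line F m.
  by rewrite /is_line /m mxrank_gen mxrank_compl rank_rV u0 genmx_id eqxx.
have num : ~~ (u <= m)%MS.
  apply: contra u0 => um; rewrite -submx0 -(capmx_compl u) sub_capmx submx_refl.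
  by move: um; rewrite genmxE.
have off_m (v : V) : (v <= m)%MS -> ~~ (u <= v)%MS.
  by move=> vm; apply: contra num => /submx_trans; apply.
have join_m Q : Q \in points_on m -> exists2 v : V, v != 0 &
    [/\ Q = pt v, (v <= m)%MS & join (pt u) Q = <<(u + v)%MS>>%MS].
  by rewrite !inE => /andP [/pointP [v v0 ->]]; rewrite incident_pt join_pt; exists v.
have -> : lines_through (pt u) = join (pt u) @: points_on m.
  apply/setP => L; apply/idP/imsetP.
    rewrite !inE incident_pt => /andP [lL uL].
    have [v v0 /andP [vL vm]] := lines_meet lL lm.
    exists (pt v); first by rewrite !inE pt_point // incident_pt.
    by rewrite join_pt (line_span lL u0 v0 (off_m v vm)).
  case=> Q /join_m [v v0 [_ vm ->]] ->.
  by rewrite !inE span_line ?off_m // incident_pt genmxE addsmxSl.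
rewrite card_in_imset ?card_points_on // => Q1 Q2.
move=> /join_m [v1 v10 [-> v1m ->]] /join_m [v2 v20 [-> v2m ->]] eq_join.
apply/eqP; rewrite eq_pt //; apply: contraNT num => n12.
have v1L : (v1 <= <<(u + v1)%MS>>%MS)%MS by rewrite genmxE addsmxSr.
have v2L : (v2 <= <<(u + v1)%MS>>%MS)%MS by rewrite eq_join genmxE addsmxSr.
have lL := span_line u0 v10 (off_m v1 v1m).
by rewrite -(line_uniq lL lm v10 v20 n12 v1L v2L v1m v2m) genmxE addsmxSl.
Qed.
End ProjectivePlane.

Section HermitianUnital.

Variables (q : nat) (F : finFieldType).
Hypothesis cardF : #|F| = (q * q)%N.
Hypothesis exprqD : forall x y : F, (x + y) ^+ q = x ^+ q + y ^+ q.

Lemma q_gt1 : (1 < q)%N.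
Proof.
by have := card_finNzRing_gt1 F; rewrite cardF; case: q => [|[|]].
Qed.

Definition frob (x : F) : F := x ^+ q.

Fact frob_is_nmod_morphism : GRing.nmod_morphism frob.
Proof. by split; [rewrite /frob expr0n; case: q q_gt1 | exact: exprqD]. Qed.
HB.instance Definition _ := GRing.isNmodMorphism.Build F F frob frob_is_nmod_morphism.

Fact frob_is_monoid_morphism : monoid_morphism frob.
Proof. by split=> [|x y]; rewrite /frob ?expr1n ?exprMn. Qed.
HB.instance Definition _ := GRing.isMonoidMorphism.Build F F frob frob_is_monoid_morphism.

Lemma frobK : involutive frob.
Proof. by move=> x; rewrite /frob -exprM -cardF expf_card. Qed.

Definition qtrace (x : F) : F := x + frob x.

Lemma card_fixed_frob_le : (#|[set y | frob y == y]| <= q)%N.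
Proof.
have sz : size ('X^q - 'X : {poly F}) = q.+1.
  by rewrite size_polyDl ?size_polyXn ?size_polyN ?size_polyX ?ltnS ?q_gt1.
have nz : ('X^q - 'X : {poly F}) != 0 by rewrite -size_poly_eq0 sz.
have := card_roots_le nz; rewrite sz.
apply: leq_trans; apply/subset_leq_card/subsetP => y.
by rewrite !inE rootE !hornerE subr_eq0.
Qed.

Lemma card_qtrace_kernel_le : (#|[set x | qtrace x == 0%R]| <= q)%N.
Proof.
have sz : size ('X^q + 'X : {poly F}) = q.+1.
  by rewrite size_polyDl ?size_polyXn ?size_polyX ?ltnS ?q_gt1.
have nz : ('X^q + 'X : {poly F}) != 0 by rewrite -size_poly_eq0 sz.
have := card_roots_le nz; rewrite sz.
apply: leq_trans; apply/subset_leq_card/subsetP => x.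
by rewrite !inE rootE !hornerE addrC.
Qed.

Lemma qtrace_image_fixed : qtrace @: F \subset [set y | frob y == y].
Proof.
by apply/subsetP => _ /imsetP [x _ ->]; rewrite inE /qtrace rmorphD /= frobK addrC.
Qed.

Lemma card_qtrace_image_kernel :
  #|qtrace @: F| = q /\ #|[set x | qtrace x == 0%R]| = q.
Proof.
have le_im := leq_trans (subset_leq_card qtrace_image_fixed) card_fixed_frob_le.
have le_ker := card_qtrace_kernel_le.
have : {morph qtrace : x y / x - y} by move=> x y; rewrite /qtrace rmorphB addrACA opprD.
move/card_le_image_kernel; rewrite cardF.
move: le_im le_ker; move: #|qtrace @: F| #|[set x | qtrace x == 0%R]| => a b.
have := q_gt1; nia.
Qed.

Lemma qtrace_onto a : frob a = a -> exists x, qtrace x = a.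
Proof.
have [im_q _] := card_qtrace_image_kernel.
have eq_card_im : #|qtrace @: F| = #|[set y | frob y == y]|.
  apply/eqP; rewrite eqn_leq subset_leq_card ?qtrace_image_fixed //.
  by rewrite im_q card_fixed_frob_le.
move=> fa; have : a \in qtrace @: F.
  by rewrite (subset_cardP eq_card_im qtrace_image_fixed) inE fa.
by case/imsetP => x _ ->; exists x.
Qed.

Local Notation V := 'rV[F]_3.
Implicit Types (u v w : V) (P L M : 'M[F]_3).

Definition hform u v : F := (u *m (map_mx frob v)^T) 0 0.

Lemma hformE u v : hform u v = \sum_(i < 3) u 0 i * frob (v 0 i).
Proof. by rewrite /hform mxE; apply: eq_bigr => i _; rewrite !mxE. Qed.

Lemma herm_hform v : herm q F v = (hform v v == 0).
Proof. by rewrite /herm hformE; congr (_ == _); apply: eq_bigr => i _; rewrite exprS. Qed.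

Lemma hformDl u w v : hform (u + w) v = hform u v + hform w v.
Proof. by rewrite !hformE -big_split; apply: eq_bigr => i _; rewrite mxE mulrDl. Qed.

Lemma hformZl a u v : hform (a *: u) v = a * hform u v.
Proof. by rewrite !hformE mulr_sumr; apply: eq_bigr => i _; rewrite mxE mulrA. Qed.

Lemma hformDr u v w : hform u (v + w) = hform u v + hform u w.
Proof. by rewrite !hformE -big_split; apply: eq_bigr => i _; rewrite mxE rmorphD mulrDr. Qed.

Lemma hformZr a u v : hform u (a *: v) = frob a * hform u v.
Proof. by rewrite !hformE mulr_sumr; apply: eq_bigr => i _; rewrite mxE rmorphM mulrCA. Qed.

Lemma hformC u v : hform v u = frob (hform u v).
Proof.
rewrite !hformE rmorph_sum; apply: eq_bigr => i _.
by rewrite rmorphM /= frobK mulrC.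
Qed.

Lemma hform_lin_comb u w s :
  hform (w + s *: u) (w + s *: u) =
  hform w w + s * hform u w + frob s * hform w u + s * frob s * hform u u.
Proof.
rewrite !hformDl !hformDr !hformZl !hformZr !addrA mulrA.
by congr (_ + _); rewrite addrAC.
Qed.

Lemma unital_pt v : v != 0 -> (pt v \in unital q F) = (hform v v == 0).
Proof.
move=> v0; rewrite !inE pt_point //=; apply/existsP/idP => [[w]|vv0]; last first.
  by exists v; rewrite v0 genmxE submx_refl herm_hform.
case/and3P=> w0; rewrite genmxE => /sub_rVP [a ew]; move: w0.
rewrite ew scaler_eq0 negb_or => /andP [a0 _].
by rewrite herm_hform hformZl hformZr mulrA !mulf_eq0 fmorph_eq0 (negbTE a0).
Qed.

Lemma unital_point P : P \in unital q F -> is_point F P.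
Proof. by rewrite !inE => /andP []. Qed.

Lemma unitalP P : P \in unital q F -> exists2 u, u != 0 & P = pt u /\ hform u u = 0.
Proof.
move=> PU; have [u u0 eP] := pointP (unital_point PU).
by exists u => //; split => //; apply/eqP; rewrite -unital_pt // -eP.
Qed.

Lemma isotropic_pair_hform_neq0 u w : u != 0 -> w != 0 -> ~~ (u <= w)%MS ->
  hform u u = 0 -> hform w w = 0 -> hform u w != 0.
Proof.
move=> u0 w0 nuw uu0 ww0; apply/eqP => uw0.
(* [u] and [w] would span a plane orthogonal to itself, too big for a nondegenerate form. *)
have wu0 : hform w u = 0 by rewrite hformC uw0 rmorph0.
have h0 x y : hform x y = 0 -> x *m (map_mx frob y)^T = 0.
  by move=> xy0; apply/matrixP => i j; rewrite !ord1 [RHS]mxE.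
have /mulmx0_rank_max : col_mx u w *m (map_mx frob (col_mx u w))^T = 0.
  by rewrite map_col_mx tr_col_mx mul_col_row !h0 ?block_mx0.
by rewrite mxrank_tr mxrank_map -addsmxE rank_adds_rV.
Qed.

(* The polar of [u]; for isotropic [u] it is the tangent to the unital at [pt u]. *)
Definition tangent u : 'M[F]_3 := <<kermx (map_mx frob u)^T>>%MS.

Lemma sub_tangent x u : (x <= tangent u)%MS = (hform x u == 0).
Proof.
rewrite genmxE; apply/sub_kermxP/eqP => [/matrixP/(_ 0 0)|xu0].
  by rewrite [RHS]mxE.
by apply/matrixP => i j; rewrite !ord1 [RHS]mxE.
Qed.

Lemma tangent_line u : u != 0 -> is_line F (tangent u).
Proof.
move=> u0; rewrite /is_line mxrank_gen mxrank_ker mxrank_tr mxrank_map.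
by rewrite rank_rV u0 /tangent genmx_id eqxx.
Qed.

Lemma unital_on_tangent u : u != 0 -> hform u u = 0 ->
  unital_on q F (tangent u) = [set pt u].
Proof.
move=> u0 uu0; apply/setP => P; rewrite [LHS]inE [RHS]inE.
apply/andP/eqP => [[PU]|->]; last first.
  by rewrite unital_pt // uu0 incident_pt sub_tangent uu0.
have [w w0 [-> ww0]] := unitalP PU; rewrite incident_pt sub_tangent => /eqP wu0.
apply/eqP; rewrite eq_pt // rV_submx_sym //; apply: contraLR (introT eqP wu0) => nuw.
by rewrite hformC fmorph_eq0 isotropic_pair_hform_neq0.
Qed.

Lemma tangent_not_secant u : u != 0 -> hform u u = 0 -> tangent u \notin secants q F.
Proof.
move=> u0 uu0; rewrite inE unital_on_tangent // cards1 andbC /=.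
by have := q_gt1; case: q.
Qed.

Lemma card_qtrace_scaled_kernel d : d != 0 -> #|[set t | qtrace (t * d) == 0]| = q.
Proof.
move=> d0; have [_ <-] := card_qtrace_image_kernel.
rewrite -(card_imset _ (mulIf d0)); apply: eq_card => x; rewrite [RHS]inE.
apply/imsetP/idP => [[t] /[!inE] tr0 -> //|tr0]; exists (x / d); rewrite ?inE divfK //.
Qed.

Lemma card_unital_on_isotropic L u w : is_line F L -> u != 0 -> w != 0 ->
  ~~ (u <= w)%MS -> (u <= L)%MS -> (w <= L)%MS -> hform u u = 0 -> hform w w = 0 ->
  #|unital_on q F L| = q.+1.
Proof.
move=> lL u0 w0 nuw uL wL uu0 ww0; set d := hform u w.
have d0 : d != 0 by apply: isotropic_pair_hform_neq0.
have wu : hform w u = frob d by rewrite hformC.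
have unital_comb t : (pt (w + t *: u) \in unital q F) = (qtrace (t * d) == 0).
  rewrite unital_pt ?rV_lin_comb_neq0 // hform_lin_comb uu0 ww0 wu.
  by rewrite mulr0 addr0 add0r -rmorphM.
set S := [set t | qtrace (t * d) == 0].
have -> : unital_on q F L = pt u |: [set pt (w + t *: u) | t in S].
  apply/setP => P; rewrite [LHS]inE; apply/andP/idP => [[PU PL]|].
    have : P \in points_on <<(u + w)%MS>>%MS.
      by rewrite !inE -(line_span lL u0 w0 nuw uL wL) PL (unital_point PU).
    rewrite points_on_span // => /setU1P [->|/imsetP [t _ eP]]; first exact: setU11.
    by rewrite setU1r //; apply/imsetP; exists t; rewrite // inE -unital_comb -eP.
  case/setU1P => [->|/imsetP [t tS ->]]; first by rewrite unital_pt // uu0 incident_pt.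
  move: tS; rewrite inE -unital_comb => ->; split => //.
  by rewrite incident_pt addmx_sub ?scalemx_sub.
rewrite cardsU1 card_in_imset; last by move=> t t' _ _; apply: pt_lin_comb_inj.
rewrite card_qtrace_scaled_kernel // (_ : pt u \in _ = false) //.
by apply/negbTE/imsetP => [[t _ /eqP]]; rewrite (negbTE (pt_neq_lin_comb t u0 w0 nuw)).
Qed.

Lemma secant_through_isotropic L u : is_line F L -> u != 0 -> hform u u = 0 ->
  (u <= L)%MS -> L != tangent u -> L \in secants q F.
Proof.
move=> lL u0 uu0 uL Lnt; have : ~~ (L <= tangent u)%MS.
  by apply: contra Lnt => sLt; apply/eqP/line_submx_eq; rewrite ?tangent_line.
case/row_subPn => i; rewrite sub_tangent; set w := row i L => wu_neq0.
set a := hform w w; set d := hform u w.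
have wu : hform w u = frob d by rewrite hformC.
have d0 : d != 0 by apply: contraNneq wu_neq0 => d0; rewrite wu d0 rmorph0.
(* Moving [w] along [L] by multiples of [u] shifts [hform w w] by a trace, and
   traces cover the fixed field of [frob], which contains [hform w w]. *)
have [c trc] : exists c, qtrace c = - a.
  by apply: qtrace_onto; rewrite rmorphN /= /a -hformC.
set w' := w + (c / d) *: u.
have w'u : hform w' u = hform w u by rewrite hformDl hformZl uu0 mulr0 addr0.
have nw'u : ~~ (w' <= u)%MS.
  by apply/negP => /sub_rVP [k ek]; move: wu_neq0; rewrite -w'u ek hformZl uu0 mulr0 eqxx.
have w'0 : w' != 0 by apply: contraNneq nw'u => ->; rewrite sub0mx.
have w'w'0 : hform w' w' = 0.
  rewrite hform_lin_comb uu0 mulr0 addr0 wu -rmorphM divfK // -addrA.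
  by rewrite -/(qtrace c) trc subrr.
rewrite !inE lL; apply/eqP/(card_unital_on_isotropic lL u0 w'0) => //.
- by rewrite rV_submx_sym.
- by rewrite addmx_sub ?scalemx_sub ?row_sub.
Qed.

Lemma secant_line L : L \in secants q F -> is_line F L.
Proof. by rewrite !inE => /andP []. Qed.

Lemma Cp_pt u : u != 0 -> hform u u = 0 ->
  Cp q F (pt u) = lines_through (pt u) :\ tangent u.
Proof.
move=> u0 uu0; apply/setP => L.
rewrite [LHS]inE in_setD1 [L \in lines_through _]inE [L \in linesPG F]inE.
apply/andP/and3P => [[sL uL]|[Lnt lL uL]].
  by split; rewrite ?secant_line //; apply: contraNneq (tangent_not_secant u0 uu0) => <-.
by split => //; apply: secant_through_isotropic lL u0 uu0 _ Lnt; rewrite -incident_pt.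
Qed.

Lemma card_Cp P : P \in unital q F -> #|Cp q F P| = (q * q)%N.
Proof.
case/unitalP => u u0 [-> uu0]; rewrite Cp_pt //.
have := cardsD1 (tangent u) (lines_through (pt u)).
rewrite card_lines_through // cardF !inE tangent_line // incident_pt sub_tangent uu0 eqxx.
by move=> [].
Qed.

Lemma join_secant P Q : P \in unital q F -> Q \in unital q F -> P != Q ->
  [/\ join P Q \in secants q F, incident F P (join P Q) & incident F Q (join P Q)].
Proof.
case/unitalP => [a a0 [-> aa0]] /unitalP [b b0 [-> bb0]]; rewrite eq_pt // => nab.
rewrite join_pt !incident_pt !genmxE addsmxSl addsmxSr; split => //.
have lL := span_line a0 b0 nab.
rewrite !inE lL; apply/eqP/(card_unital_on_isotropic lL a0 b0 nab) => //.
  by rewrite genmxE addsmxSl.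
by rewrite genmxE addsmxSr.
Qed.

Lemma join_uniq P R M : P \in unital q F -> R \in unital q F -> P != R ->
  is_line F M -> incident F P M -> incident F R M -> join P R = M.
Proof.
move=> PU RU PR lM PM RM; have [sJ PJ RJ] := join_secant PU RU PR.
exact: points_line_uniq (unital_point PU) (unital_point RU) PR (secant_line sJ) lM PJ RJ PM RM.
Qed.

Lemma card_unital P : P \in unital q F -> #|unital q F| = (q * q * q).+1.
Proof.
move=> PU; rewrite (cardsD1 P) PU add1n -sum1_card; congr _.+1.
have join_Cp R : R \in unital q F :\ P -> join P R \in Cp q F P.
  rewrite in_setD1 => /andP [RP RU]; have PR : P != R by rewrite eq_sym.
  by have [sJ PJ _] := join_secant PU RU PR; rewrite inE sJ.
rewrite (partition_big (join P) (mem (Cp q F P))) //=.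
rewrite (eq_bigr (fun _ => q)) ?sum_nat_const ?card_Cp ?mulnA // => M.
rewrite inE => /andP [sM PM].
rewrite sum1dep_card.
have -> : [set R in unital q F :\ P | join P R == M] = unital_on q F M :\ P.
  apply/setP => R; rewrite [LHS]inE !in_setD1 [R \in unital_on _ _ _]inE -andbA.
  apply: andb_id2l => RP; apply: andb_id2l => RU; have PR : P != R by rewrite eq_sym.
  apply/eqP/idP => [<-|RM]; first by case: (join_secant PU RU PR).
  exact: join_uniq (secant_line sM) PM RM.
have := cardsD1 P (unital_on q F M).
by rewrite [P \in _]inE PU PM add1n; move: sM; rewrite inE => /andP [_ /eqP ->] [].
Qed.

Lemma Cp_clique P (S : {set 'M[F]_3}) :
  P \in unital q F -> S \subset Cp q F P -> is_clique q F S.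
Proof.
move=> PU /subsetP SCp; split.
  by apply/subsetP => M /SCp; rewrite inE => /andP [].
move=> M1 M2 /SCp + /SCp; rewrite !inE => /andP [_ PM1] /andP [_ PM2] M12.
by rewrite /Hadj M12; apply/existsP; exists P; rewrite PU PM1 PM2.
Qed.

Lemma secants_meet_uniq M1 M2 P P' : M1 \in secants q F -> M2 \in secants q F ->
  M1 != M2 -> P \in unital q F -> P' \in unital q F ->
  incident F P M1 -> incident F P M2 -> incident F P' M1 -> incident F P' M2 -> P = P'.
Proof.
move=> sM1 sM2 M12 PU P'U PM1 PM2 P'M1 P'M2; apply/eqP; apply: contraNT M12 => PP'.
apply/eqP; have [lM1 lM2] := (secant_line sM1, secant_line sM2).
exact: points_line_uniq (unital_point PU) (unital_point P'U) PP' lM1 lM2 PM1 P'M1 PM2 P'M2.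
Qed.

Section Neighbourhood.

Variable l : 'M[F]_3.
Hypothesis hl : l \in secants q F.

Lemma card_unital_on_secant : #|unital_on q F l| = q.+1.
Proof. by move: hl; rewrite inE => /andP [_ /eqP]. Qed.

Lemma unital_on_sub : unital_on q F l \subset unital q F.
Proof. by apply/subsetP => P; rewrite inE => /andP []. Qed.

Lemma CpD1_sub_Nbhd P : P \in unital_on q F l -> Cp q F P :\ l \subset Nbhd q F l.
Proof.
case/setIdP => PU Pl; apply/subsetP => M /setD1P [Ml /setIdP [sM PM]].
by rewrite inE sM /Hadj eq_sym Ml; apply/existsP; exists P; rewrite PU Pl PM.
Qed.

Lemma card_CpD1 P : P \in unital_on q F l -> #|Cp q F P :\ l| = (q ^ 2 - 1)%N.
Proof.
case/setIdP => PU Pl; have := cardsD1 l (Cp q F P).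
by rewrite inE hl Pl card_Cp // add1n => eq_card; rewrite expnS expn1 eq_card subn1.
Qed.

Lemma disjoint_CpD1 P P' : P \in unital_on q F l -> P' \in unital_on q F l -> P != P' ->
  [disjoint Cp q F P :\ l & Cp q F P' :\ l].
Proof.
move=> /setIdP [PU Pl] /setIdP [P'U P'l] PP'.
rewrite -setI_eq0; apply: contraNT PP' => /set0Pn [M /setIP [/setD1P [Ml /setIdP [sM PM]]]].
case/setD1P => _ /setIdP [_ P'M]; apply/eqP.
exact: secants_meet_uniq sM hl Ml PU P'U PM Pl P'M P'l.
Qed.

Lemma card_unital_off_line : #|unital q F :\: unital_on q F l| = (q ^ 3 - q)%N.
Proof.
have [P Pl] : exists P, P \in unital_on q F l.
  by apply/set0Pn; rewrite -card_gt0 card_unital_on_secant.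
rewrite cardsD (setIidPr unital_on_sub) card_unital_on_secant.
rewrite (card_unital (subsetP unital_on_sub _ Pl)).
by rewrite subSS !expnS expn0 muln1 mulnA.
Qed.

Lemma CpI_Nbhd P : P \in unital q F -> ~~ incident F P l ->
  Cp q F P :&: Nbhd q F l =
  [set M in secants q F | incident F P M && [exists R in unital_on q F l, incident F R M]].
Proof.
move=> PU Pnl; apply/setP => M.
rewrite in_setI [M \in Cp _ _ _]inE [M \in Nbhd _ _ _]inE [RHS]inE.
case sM: (M \in secants q F) => //=; case PM: (incident F P M) => //=.
apply/andP/existsP => [[_ /existsP [R /and3P [RU Rl RM]]]|[R /andP [Rl RM]]].
  by exists R; rewrite inE RU Rl.
split; first by apply: contraNneq Pnl => ->.
by apply/existsP; exists R; move: Rl; rewrite inE => /andP [-> ->].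
Qed.

Lemma CpI_Nbhd_joins P : P \in unital q F -> ~~ incident F P l ->
  Cp q F P :&: Nbhd q F l = join P @: unital_on q F l.
Proof.
move=> PU Pnl; rewrite CpI_Nbhd //; apply/setP => M; apply/idP/imsetP.
  rewrite inE => /and3P [sM PM /existsP [R /andP [Rl RM]]].
  have [RU Rnl] := setIdP Rl; have PR : P != R by apply: contraNneq Pnl => ->.
  by exists R; rewrite // (join_uniq PU RU PR (secant_line sM)).
case=> R Rl ->; have [RU Rnl] := setIdP Rl; have PR : P != R by apply: contraNneq Pnl => ->.
have [sJ PJ RJ] := join_secant PU RU PR.
by rewrite inE sJ PJ; apply/existsP; exists R; rewrite Rl.
Qed.

Lemma card_CpI_Nbhd P : P \in unital q F -> ~~ incident F P l ->
  #|Cp q F P :&: Nbhd q F l| = q.+1.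
Proof.
move=> PU Pnl; rewrite CpI_Nbhd_joins // card_in_imset ?card_unital_on_secant //.
move=> R1 R2 /setIdP [R1U R1l] /setIdP [R2U R2l] eqJ.
have PR1 : P != R1 by apply: contraNneq Pnl => ->.
have PR2 : P != R2 by apply: contraNneq Pnl => ->.
have [sJ PJ R1J] := join_secant PU R1U PR1.
have [_ _ R2J] := join_secant PU R2U PR2; rewrite -eqJ in R2J.
have Jl : join P R1 != l by apply: contraNneq Pnl => <-.
exact: secants_meet_uniq sJ hl Jl R1U R2U R1J R1l R2J R2l.
Qed.

Lemma clique_at_Cp P M : M \in clique_at q F l P -> M \in Cp q F P.
Proof. by rewrite /clique_at; case: ifP => _; [case/setD1P | case/setIP]. Qed.

Lemma Nbhd_clique_at P M : M \in Nbhd q F l -> incident F P M -> M \in clique_at q F l P.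
Proof.
move=> /[dup] MN /setIdP [sM /andP [lM _]] PM; rewrite /clique_at.
by case: ifP => _; rewrite ?in_setD1 ?in_setI 1?eq_sym ?lM ?MN inE sM PM.
Qed.

Lemma Hadj_clique_at_unique M1 M2 : M1 \in Nbhd q F l -> M2 \in Nbhd q F l ->
  Hadj q F M1 M2 ->
  exists! P, [/\ P \in unital q F, M1 \in clique_at q F l P & M2 \in clique_at q F l P].
Proof.
move=> M1N M2N /andP [M12 /existsP [P /and3P [PU PM1 PM2]]].
exists P; split; first by split; rewrite // Nbhd_clique_at.
move=> P' [P'U /clique_at_Cp /setIdP [sM1 P'M1] /clique_at_Cp /setIdP [sM2 P'M2]].
exact: secants_meet_uniq sM1 sM2 M12 PU P'U PM1 PM2 P'M1 P'M2.
Qed.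

Lemma Gadj_clique_atP M1 M2 : M1 \in Nbhd q F l -> M2 \in Nbhd q F l ->
  Gadj q F l M1 M2 <->
  (M1 != M2 /\ exists2 P, P \in unital q F :\: unital_on q F l &
                         (M1 \in clique_at q F l P) && (M2 \in clique_at q F l P)).
Proof.
move=> M1N M2N; split => [/andP [M12 /existsP [P /and4P [PU Pnl PM1 PM2]]]|[M12 [P]]].
  split => //; exists P; last by rewrite !Nbhd_clique_at.
  by rewrite in_setD PU andbT inE PU.
rewrite in_setD => /andP [Pnl PU] /andP [/clique_at_Cp /setIdP [_ PM1]].
case/clique_at_Cp/setIdP => _ PM2; move: Pnl; rewrite inE PU /= => Pnl.
by rewrite /Gadj M12; apply/existsP; exists P; rewrite PU Pnl PM1 PM2.
Qed.

End Neighbourhood.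
End HermitianUnital.

Theorem lemma2p4 (q : nat) (F : finFieldType)
  (hq : exists p k : nat, [/\ prime p, (0 < k)%N & q = (p ^ k)%N])
  (hF : #|F| = (q ^ 2)%N)
  (l : 'M[F]_3) (hl : l \in secants q F) :
  [/\
   [/\ #|unital_on q F l| = q.+1,
       (forall p, p \in unital_on q F l ->
          [/\ Cp q F p :\ l \subset Nbhd q F l,
              is_clique q F (Cp q F p :\ l)
            & #|Cp q F p :\ l| = (q ^ 2 - 1)%N])
     & (forall p p', p \in unital_on q F l -> p' \in unital_on q F l -> p != p' ->
          [disjoint (Cp q F p :\ l) & (Cp q F p' :\ l)])],
   [/\ #|unital q F :\: unital_on q F l| = (q ^ 3 - q)%N
     & (forall p, p \in unital q F :\: unital_on q F l ->
          [/\ Cp q F p :&: Nbhd q F l =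
                [set M in secants q F |
                   incident F p M && [exists r in unital_on q F l, incident F r M]],
              is_clique q F (Cp q F p :&: Nbhd q F l)
            & #|Cp q F p :&: Nbhd q F l| = q.+1])],
   (forall M1 M2, M1 \in Nbhd q F l -> M2 \in Nbhd q F l -> Hadj q F M1 M2 ->
      exists! p, [/\ p \in unital q F, M1 \in clique_at q F l p
                   & M2 \in clique_at q F l p])
 & (forall M1 M2, M1 \in Nbhd q F l -> M2 \in Nbhd q F l ->
      Gadj q F l M1 M2 <->
      (M1 != M2 /\ exists2 p, p \in unital q F :\: unital_on q F l &
                              (M1 \in clique_at q F l p) && (M2 \in clique_at q F l p)))].
Proof.
have [p [k [p_pr _ q_pk]]] := hq.
have cardF : #|F| = (q * q)%N by rewrite hF expnS expn1.
have exprqD (x y : F) : (x + y) ^+ q = x ^+ q + y ^+ q.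
  have charF : p \in [pchar F].
    by apply: (@card_finPcharP F p (k * 2)); rewrite // hF q_pk expnM.
  by apply: exprDn_pchar; rewrite q_pk pnatX pnatE ?charF.
split.
- split; first exact: card_unital_on_secant.
    move=> P Pl; have PU := subsetP (unital_on_sub q l) P Pl; split.
    + exact: CpD1_sub_Nbhd.
    + exact: Cp_clique PU (subD1set _ _).
    + exact: (card_CpD1 cardF exprqD hl Pl).
  exact: disjoint_CpD1 hl.
- split; first exact: (card_unital_off_line cardF exprqD hl).
  move=> P /setDP [PU]; rewrite inE PU /= => Pnl; split.
  + exact: CpI_Nbhd.
  + exact: Cp_clique PU (subsetIl _ _).
  + exact: (card_CpI_Nbhd cardF exprqD hl PU Pnl).
- exact: Hadj_clique_at_unique.
- exact: Gadj_clique_atP.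
Qed.
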